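(* Under the standing setup and with $u$, $z^*$, $r_u$, $\delta_v$, $z_v$ as in the context, assume $\beta(u)\ne0$ and let $v\in B(u,r_u)\cap\widetilde X$ satisfy $\|u-v\|\le\frac{\varepsilon\|\beta(u)\|}{480}$. Then \[\|z_v-\beta(v)\|\le\frac{128\|u-u_{NN}\|^{1/2}}{\varepsilon^{1/2}}\|u-v\|^{1/2}.\]
   Context: Norms are Euclidean; $B(x,r)$ is the open ball. Standing setup: $X\subseteq\mathbb{R}^d$ has reach $\tau_X>0$, where $\tau_X=\sup\{t\ge0:\text{every }x\text{ with }d(x,X)<t\text{ has a unique closest point in }\overline X\}$; $\widetilde X=X+B(0,\tau_X/2)$; for $u\in\widetilde X$, $u_{NN}$ is the unique closest point to $u$ in $\overline X$, and it is a known fact that $\|u_{NN}-v_{NN}\|\le2\|u-v\|$ for all $u,v\in\widetilde X$. $\varepsilon\in(0,1)$. $S_X=\overline{\{(x-y)/\|x-y\|:x\ne y\in X\}}$. A linear $\Pi$ provides $\eta$-convex hull distortion for $T\subseteq S^{d-1}$ if $|\,\|\Pi x\|-\|x\|\,|<\eta$ for all $x\in\operatorname{conv}(T)$. $\mathcal C=\{w_1,\ldots,w_\ell\}\subseteq S_X$ is finite with every $v\in S_X$ within distance $<\varepsilon/40$ of some $w_i$; $\Pi\in\mathbb{R}^{m\times d}$ provides $\frac{\varepsilon}{240}$-convex hull distortion for $S_X$. For $z\in\mathbb{R}^m$, $u\in\widetilde X$, $i=1,\ldots,\ell$: $\tilde g_i(z,u)=\langle z,\Pi w_i\rangle-\langle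 u-u_{NN},w_i\rangle-\frac{\varepsilon}{30}\|u-u_{NN}\|$, $\tilde g_{\ell+i}(z,u)=\langle u-u_{NN},w_i\rangle-\langle z,\Pi w_i\rangle-\frac{\varepsilon}{30}\|u-u_{NN}\|$; $\widetilde F_u=\{z:\tilde g_i(z,u)\le0\ \forall i\}$; $\beta(u)=\arg\min_{z\in\widetilde F_u}\|z\|$. Fix $u\in\widetilde X\setminus\overline X$ and $z^*\in\mathbb{R}^m$ with $\|z^*\|\le\|u-u_{NN}\|$ and $\tilde g_i(z^*,u)\le-\frac{\varepsilon}{60}\|u-u_{NN}\|$ for all $i$. Set $r_u=\min\{1,\frac{\varepsilon\|u-u_{NN}\|}{480}\}$, and for $v\in B(u,r_u)\cap\widetilde X$, $\delta_v=\frac{240\|u-v\|}{\varepsilon\|u-u_{NN}\|}$, $z_v=(1-\delta_v)\beta(u)+\delta_vz^*$. *)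

From HB Require Import structures.
From mathcomp Require Import all_boot all_order all_algebra.
From mathcomp Require Import all_classical all_reals all_analysis.
Set Implicit Arguments. Unset Strict Implicit. Unset Printing Implicit Defensive.
Import Order.TTheory GRing.Theory Num.Theory.
Local Open Scope classical_set_scope.
Local Open Scope ring_scope.

Definition dotv {R : realType} {d : nat} (x y : 'rV[R]_d) : R :=
  \sum_(i < d) x 0 i * y 0 i.
Definition enorm {R : realType} {d : nat} (x : 'rV[R]_d) : R := Num.sqrt (dotv x x).

Definition eclosure {R : realType} {d : nat} (A : set 'rV[R]_d) : set 'rV[R]_d :=
  [set p | forall e : R, 0 < e -> exists2 y, A y & enorm (p - y) < e].

(* d(x, A) = inf_{y in A} |x - y| (as an extended real; +oo if A is empty) *)
Definition setdist {R : realType} {d : nat} (x : 'rV[R]_d) (A : set 'rV[R]_d) : \bar R :=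
  ereal_inf [set (enorm (x - y))%:E | y in A].

Definition is_nearest {R : realType} {d : nat} (A : set 'rV[R]_d) (x p : 'rV[R]_d) : Prop :=
  eclosure A p /\ forall q, eclosure A q -> enorm (x - p) <= enorm (x - q).

Definition unique_nearest {R : realType} {d : nat} (A : set 'rV[R]_d) (x : 'rV[R]_d) : Prop :=
  exists! p, is_nearest A x p.

Definition reach {R : realType} {d : nat} (A : set 'rV[R]_d) : \bar R :=
  ereal_sup [set t%:E | t in [set t : R | 0 <= t /\
     forall x, (setdist x A < t%:E)%E -> unique_nearest A x]].

Definition tube {R : realType} {d : nat} (A : set 'rV[R]_d) : set 'rV[R]_d :=
  [set u | exists2 x, A x & ((enorm (u - x))%:E < reach A * (2^-1)%:E)%E].

(* u_NN : the (unique, for u in the tube) closest point to u in cl A *)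
Definition NN {R : realType} {d : nat} (A : set 'rV[R]_d) (u : 'rV[R]_d) : 'rV[R]_d :=
  xget 0 (is_nearest A u).

Definition unit_secants {R : realType} {d : nat} (A : set 'rV[R]_d) : set 'rV[R]_d :=
  eclosure [set s | exists x y, [/\ A x, A y, x <> y & s = (enorm (x - y))^-1 *: (x - y)]].

Definition conv {R : realType} {d : nat} (T : set 'rV[R]_d) : set 'rV[R]_d :=
  [set x | exists n (lam : 'I_n -> R) (t : 'I_n -> 'rV[R]_d),
     [/\ forall i, 0 <= lam i, \sum_(i < n) lam i = 1, forall i, T (t i)
       & x = \sum_(i < n) lam i *: t i]].

Definition Papp {R : realType} {m d : nat} (P : 'M[R]_(m, d)) (x : 'rV[R]_d) : 'rV[R]_m :=
  x *m P^T.

Definition hull_distortion {R : realType} {m d : nat} (P : 'M[R]_(m, d)) (eta : R)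
    (T : set 'rV[R]_d) : Prop :=
  forall x, conv T x -> `| enorm (Papp P x) - enorm x | < eta.

Definition g_lo {R : realType} {d m l : nat} (X : set 'rV[R]_d) (w : 'I_l -> 'rV[R]_d)
    (P : 'M[R]_(m, d)) (eps : R) (z : 'rV[R]_m) (u : 'rV[R]_d) (i : 'I_l) : R :=
  dotv z (Papp P (w i)) - dotv (u - NN X u) (w i) - eps / 30 * enorm (u - NN X u).
Definition g_hi {R : realType} {d m l : nat} (X : set 'rV[R]_d) (w : 'I_l -> 'rV[R]_d)
    (P : 'M[R]_(m, d)) (eps : R) (z : 'rV[R]_m) (u : 'rV[R]_d) (i : 'I_l) : R :=
  dotv (u - NN X u) (w i) - dotv z (Papp P (w i)) - eps / 30 * enorm (u - NN X u).

Definition Ftil {R : realType} {d m l : nat} (X : set 'rV[R]_d) (w : 'I_l -> 'rV[R]_d)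
    (P : 'M[R]_(m, d)) (eps : R) (u : 'rV[R]_d) : set 'rV[R]_m :=
  [set z | forall i, g_lo X w P eps z u i <= 0 /\ g_hi X w P eps z u i <= 0].

Definition beta {R : realType} {d m l : nat} (X : set 'rV[R]_d) (w : 'I_l -> 'rV[R]_d)
    (P : 'M[R]_(m, d)) (eps : R) (u : 'rV[R]_d) : 'rV[R]_m :=
  xget 0 [set z | Ftil X w P eps u z /\ forall z', Ftil X w P eps u z' -> enorm z <= enorm z'].

From HB Require Import structures.
From mathcomp Require Import all_boot all_order all_algebra.
From mathcomp Require Import all_classical all_reals all_analysis.
From mathcomp Require Import ring lra.
Import Order.TTheory GRing.Theory Num.Theory.
Local Open Scope classical_set_scope.
Local Open Scope ring_scope.
Import numFieldNormedType.Exports.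
Set Implicit Arguments. Unset Strict Implicit.

(* Both [beta u] and [beta v] are minimum-norm points of convex sets.  Since the
   constraints move by at most [4 |u - v|] from [u] to [v], shifting a feasible
   point by [delta] towards the strictly feasible [z*] restores feasibility; hence
   [z_v] is feasible at [v] and [(1 - delta) beta(v) + delta z*] is feasible at [u].
   The two norm comparisons that follow give [|z_v| <= |beta u| + c] and
   [|beta v| >= |beta u| - c] with [c = delta |z*|], and the parallelogram law
   at the minimum-norm point [beta v] turns this into
   [|z_v - beta v|^2 <= 2 |z_v|^2 - 2 |beta v|^2 <= 8 |beta u| c], where
   [c <= delta |u - u_NN| = 240 |u - v| / eps]. *)

Section InnerProduct.
Variables (R : realType) (n : nat).
Implicit Types (x y z : 'rV[R]_n) (a t : R).

Lemma dotvC x y : dotv x y = dotv y x.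
Proof. by apply: eq_bigr => i _; rewrite mulrC. Qed.

Lemma dotvDl x y z : dotv (x + y) z = dotv x z + dotv y z.
Proof. by rewrite /dotv -big_split; apply: eq_bigr => i _; rewrite mxE mulrDl. Qed.

Lemma dotvZl a x y : dotv (a *: x) y = a * dotv x y.
Proof. by rewrite /dotv mulr_sumr; apply: eq_bigr => i _; rewrite mxE mulrA. Qed.

Lemma dotvNl x y : dotv (- x) y = - dotv x y.
Proof. by rewrite -scaleN1r dotvZl mulN1r. Qed.

Lemma dotvBl x y z : dotv (x - y) z = dotv x z - dotv y z.
Proof. by rewrite dotvDl dotvNl. Qed.

Lemma dotvDr x y z : dotv z (x + y) = dotv z x + dotv z y.
Proof. by rewrite dotvC dotvDl !(dotvC z). Qed.

Lemma dotvZr a x y : dotv y (a *: x) = a * dotv y x.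
Proof. by rewrite dotvC dotvZl dotvC. Qed.

Lemma dotvBr x y z : dotv z (x - y) = dotv z x - dotv z y.
Proof. by rewrite dotvC dotvBl !(dotvC z). Qed.

Lemma dotv0l x : dotv 0 x = 0.
Proof. by rewrite -(scale0r 0) dotvZl mul0r. Qed.

Lemma dotvv_ge0 x : 0 <= dotv x x.
Proof. by apply: sumr_ge0 => i _; rewrite -expr2 sqr_ge0. Qed.

Lemma dotvv_eq0 x : dotv x x = 0 -> x = 0.
Proof.
move=> /eqP; rewrite psumr_eq0 => [/allP x0|i _]; last by rewrite -expr2 sqr_ge0.
apply/rowP => i; rewrite mxE.
by have /= := x0 i (mem_index_enum _); rewrite mulf_eq0 orbb => /eqP.
Qed.

Lemma enorm_ge0 x : 0 <= enorm x.
Proof. exact: sqrtr_ge0. Qed.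

Lemma sqr_enorm x : enorm x ^+ 2 = dotv x x.
Proof. by rewrite sqr_sqrtr // dotvv_ge0. Qed.

Lemma dotv_sqr_le x y : dotv x y ^+ 2 <= dotv x x * dotv y y.
Proof.
have [/dotvv_eq0 ->|y0] := eqVneq (dotv y y) 0; first by rewrite dotvC !dotv0l expr0n /= mulr0.
have ypos : 0 < dotv y y by rewrite lt0r y0 dotvv_ge0.
set t := dotv x y / dotv y y.
(* expand [0 <= |x - t y|^2] at the minimising [t] *)
have := dotvv_ge0 (x - t *: y).
rewrite !dotvBl !dotvBr !dotvZl !dotvZr (dotvC y x).
have -> : dotv x x - t * dotv x y - (t * dotv x y - t * (t * dotv y y)) =
          (dotv x x * dotv y y - dotv x y ^+ 2) / dotv y y.
  by rewrite /t; field; rewrite gt_eqF.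
by rewrite pmulr_lge0 ?invr_gt0 // subr_ge0.
Qed.

Lemma norm_dotv_le x y : `|dotv x y| <= enorm x * enorm y.
Proof.
rewrite -(ler_pXn2r (n := 2)) ?nnegrE ?mulr_ge0 ?enorm_ge0 //.
by rewrite exprMn !sqr_enorm real_normK ?num_real // dotv_sqr_le.
Qed.

Lemma ler_enormD x y : enorm (x + y) <= enorm x + enorm y.
Proof.
rewrite -(ler_pXn2r (n := 2)) ?nnegrE ?addr_ge0 ?enorm_ge0 //.
rewrite sqr_enorm dotvDl !dotvDr (dotvC y x) sqrrD !sqr_enorm.
have := le_trans (ler_norm _) (norm_dotv_le x y); lra.
Qed.

Lemma enormZ a x : enorm (a *: x) = `|a| * enorm x.
Proof.
by rewrite /enorm dotvZl dotvZr mulrA -expr2 sqrtrM ?sqr_ge0 // sqrtr_sqr.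
Qed.

Lemma enormN x : enorm (- x) = enorm x.
Proof. by rewrite -scaleN1r enormZ normrN normr1 mul1r. Qed.

Lemma enorm_distC x y : enorm (x - y) = enorm (y - x).
Proof. by rewrite -enormN opprB. Qed.

Lemma lerB_enorm_dist x y : enorm x - enorm y <= enorm (x - y).
Proof. by rewrite lerBlDr; have := ler_enormD (x - y) y; rewrite subrK. Qed.

Lemma ler_enorm_combination t x y : 0 <= t <= 1 ->
  enorm ((1 - t) *: x + t *: y) <= (1 - t) * enorm x + t * enorm y.
Proof.
move=> /andP[t0 t1]; apply: le_trans (ler_enormD _ _) _.
by rewrite !enormZ !ger0_norm // subr_ge0.
Qed.

Lemma parallelogram x y :
  enorm (x - y) ^+ 2 + enorm (x + y) ^+ 2 = 2 * enorm x ^+ 2 + 2 * enorm y ^+ 2.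
Proof.
rewrite !sqr_enorm !dotvBl !dotvDl !dotvBr !dotvDr (dotvC y x); ring.
Qed.

(* The midpoint inequality is what minimality of [y] gives on a convex set. *)
Lemma min_norm_gap x y : enorm y <= enorm (2^-1 *: (x + y)) ->
  enorm (x - y) ^+ 2 <= 2 * enorm x ^+ 2 - 2 * enorm y ^+ 2.
Proof.
rewrite -(ler_pXn2r (n := 2)) ?nnegrE ?enorm_ge0 // enormZ exprMn.
rewrite ger0_norm ?invr_ge0 ?ler0n //.
have := parallelogram x y; lra.
Qed.

Lemma enorm_residual_shift x y fx fy : enorm (fx - fy) <= 2 * enorm (x - y) ->
  enorm ((x - fx) - (y - fy)) <= 3 * enorm (x - y).
Proof.
have -> : (x - fx) - (y - fy) = (x - y) - (fx - fy) by apply/rowP => j; rewrite !mxE; ring.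
by move=> lip; apply: le_trans (ler_enormD _ _) _; rewrite enormN; lra.
Qed.

End InnerProduct.

Section MinimumNorm.
Variables (R : realType) (n : nat).

Lemma dotv_continuous (T : topologicalType) (f g : T -> 'rV[R]_n) :
  continuous f -> continuous g -> continuous (fun t => dotv (f t) (g t)).
Proof.
move=> cf cg; rewrite /dotv -fct_sumE.
apply: (big_ind (fun h : T -> R => continuous h)) => [|h k ch ck t|i _ t].
- exact: cst_continuous.
- exact: cvgD (ch t) (ck t).
- have coord (h : T -> 'rV[R]_n) : continuous h -> continuous (fun x => h x 0 i).
    move=> chh x; apply: (@continuous_comp _ _ _ h (fun M : 'rV[R]_n => M 0 i) x (chh x)).
    exact: coord_continuous.
  exact: cvgM (coord f cf t) (coord g cg t).
Qed.

Lemma mx_norm_le_enorm (z : 'rV[R]_n) : `|z| <= enorm z.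
Proof.
rewrite [`|z|]mx_normrE; apply: bigmax_le => [|[i j] _ /=]; first exact: enorm_ge0.
rewrite (ord1 i) -sqrtr_sqr ler_sqrt ?dotvv_ge0 // /dotv (bigD1 j) //=.
by rewrite lerDl sumr_ge0 // => k _; rewrite -expr2 sqr_ge0.
Qed.

Lemma closed_min_enorm (F : set 'rV[R]_n) z0 : closed F -> F z0 ->
  exists2 z, F z & forall z', F z' -> enorm z <= enorm z'.
Proof.
move=> Fcl Fz0.
have sq_cont : continuous (fun z : 'rV[R]_n => dotv z z).
  by apply: dotv_continuous => x; exact: cvg_id.
pose A := F `&` [set z | dotv z z <= dotv z0 z0].
have A0 : A !=set0 by exists z0; split => /=.
have Acl : closed A.
  by apply: closedI => //; exact: (continuous_closedP _).1 sq_cont _ (@closed_le R (dotv z0 z0)).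
have Abd : bounded_set A.
  exists (enorm z0); split; first exact: num_real.
  move=> M z0M z [_ zz0] /=; apply: le_trans (mx_norm_le_enorm z) _.
  apply: ltW; apply: le_lt_trans z0M; by rewrite ler_sqrt ?dotvv_ge0.
have [c /set_mem[Fc cz0] cmin] :=
  EVT_min_rV A0 (bounded_closed_compact Abd Acl) (continuous_subspaceT sq_cont).
exists c => // z Fz; rewrite ler_sqrt ?dotvv_ge0 //.
have [zz0|z0z] := leP (dotv z z) (dotv z0 z0); first by apply: cmin; rewrite inE.
exact: ltW (le_lt_trans cz0 z0z).
Qed.

End MinimumNorm.

Lemma unit_secant_enorm_le1 (R : realType) d (X : set 'rV[R]_d) s :
  unit_secants X s -> enorm s <= 1.
Proof.
move=> Xs; apply/ler_addgt0Pr => e e0.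
have [_ [x [y [_ _ _ ->]]] close] := Xs e e0.
have secant_le1 : enorm ((enorm (x - y))^-1 *: (x - y)) <= 1.
  rewrite enormZ ger0_norm ?invr_ge0 ?enorm_ge0 //.
  by have [->|xy0] := eqVneq (enorm (x - y)) 0; [rewrite invr0 mul0r | rewrite mulVf].
by have := ler_enormD (s - (enorm (x - y))^-1 *: (x - y)) ((enorm (x - y))^-1 *: (x - y));
  rewrite subrK; lra.
Qed.

Lemma g_shift_arith (R : realFieldType) (e s k dp dq np nq : R) : 0 <= e <= 1 ->
  `|dp - dq| <= 3 * s -> np - nq <= 3 * s ->
  k - dq - e / 30 * nq <= k - dp - e / 30 * np + 4 * s /\
  dq - k - e / 30 * nq <= dp - k - e / 30 * np + 4 * s.
Proof.
move=> /andP[e0 e1]; rewrite ler_norml => /andP[dlo dhi] nle.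
have : e / 30 * (np - nq) <= e / 30 * (3 * s) by rewrite ler_wpM2l ?divr_ge0.
have : e * s <= s by rewrite ler_piMl //; lra.
split; lra.
Qed.

Section Constraints.
Variables (R : realType) (d m l : nat) (X : set 'rV[R]_d) (w : 'I_l -> 'rV[R]_d)
  (P : 'M[R]_(m, d)) (eps : R).

Lemma g_lo_combination t x y u i :
  g_lo X w P eps ((1 - t) *: x + t *: y) u i =
  (1 - t) * g_lo X w P eps x u i + t * g_lo X w P eps y u i.
Proof. by rewrite /g_lo (dotvDl ((1 - t) *: x)) !dotvZl; ring. Qed.

Lemma g_hi_combination t x y u i :
  g_hi X w P eps ((1 - t) *: x + t *: y) u i =
  (1 - t) * g_hi X w P eps x u i + t * g_hi X w P eps y u i.
Proof. by rewrite /g_hi (dotvDl ((1 - t) *: x)) !dotvZl; ring. Qed.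

Lemma Ftil_convex u t x y : 0 <= t <= 1 ->
  Ftil X w P eps u x -> Ftil X w P eps u y ->
  Ftil X w P eps u ((1 - t) *: x + t *: y).
Proof.
move=> /andP[t0 t1] Fx Fy i; rewrite g_lo_combination g_hi_combination.
have [x_lo x_hi] := Fx i; have [y_lo y_hi] := Fy i.
by split; rewrite -[0]addr0; apply: lerD; apply: mulr_ge0_le0; rewrite ?subr_ge0.
Qed.

Lemma Ftil_closed u : closed (Ftil X w P eps u).
Proof.
have dot_cont c : continuous (fun z : 'rV[R]_m => dotv z c).
  by apply: dotv_continuous; [move=> z; exact: cvg_id | exact: cst_continuous].
have -> : Ftil X w P eps u = \bigcap_(i in [set: 'I_l])
   ([set z | g_lo X w P eps z u i <= 0] `&` [set z | g_hi X w P eps z u i <= 0]).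
  by apply/seteqP; split => z Fz i => [_|]; [exact: Fz | exact: Fz i I].
have closed_le0 (g : 'rV[R]_m -> R) : continuous g -> closed [set z | g z <= 0].
  by move=> g_cont; exact: (continuous_closedP g).1 g_cont _ (@closed_le R 0).
apply: closed_bigI => i _; apply: closedI; apply: closed_le0 => z; rewrite /g_lo /g_hi.
- exact: cvgB (cvgB (dot_cont _ z) (cvg_cst _)) (cvg_cst _).
- exact: cvgB (cvgB (cvg_cst _) (dot_cont _ z)) (cvg_cst _).
Qed.

Lemma beta_argmin u z0 : Ftil X w P eps u z0 ->
  Ftil X w P eps u (beta X w P eps u) /\
  forall z, Ftil X w P eps u z -> enorm (beta X w P eps u) <= enorm z.
Proof.
move=> Fz0; have [z Fz zmin] := closed_min_enorm (Ftil_closed (u := u)) Fz0.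
exact: (@xgetPex _ 0 [set b | Ftil X w P eps u b /\
  forall z, Ftil X w P eps u z -> enorm b <= enorm z] (ex_intro _ z (conj Fz zmin))).
Qed.

Lemma g_shift u v z i s : 0 <= eps <= 1 -> enorm (w i) <= 1 ->
  enorm ((u - NN X u) - (v - NN X v)) <= 3 * s ->
  g_lo X w P eps z v i <= g_lo X w P eps z u i + 4 * s /\
  g_hi X w P eps z v i <= g_hi X w P eps z u i + 4 * s.
Proof.
move=> e01 w1; rewrite /g_lo /g_hi.
set p := u - NN X u; set q := v - NN X v => pq.
have dot_shift : `|dotv p (w i) - dotv q (w i)| <= 3 * s.
  rewrite -dotvBl; apply: le_trans (norm_dotv_le _ _) _.
  by apply: le_trans pq; rewrite ler_piMr ?enorm_ge0.
have norm_shift : enorm p - enorm q <= 3 * s := le_trans (lerB_enorm_dist p q) pq.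
exact: g_shift_arith e01 dot_shift norm_shift.
Qed.

End Constraints.

Lemma shifted_combination_le0 (R : realFieldType) (t Gb Gz G E s : R) : 0 <= t <= 1 ->
  Gb <= 0 -> Gz <= - E -> t * E = 4 * s -> G <= (1 - t) * Gb + t * Gz + 4 * s -> G <= 0.
Proof.
move=> /andP[t0 t1] Gb0 GzE tE GGb.
have : (1 - t) * Gb <= 0 by rewrite mulr_ge0_le0 ?subr_ge0.
have : t * Gz <= t * - E by rewrite ler_wpM2l.
by rewrite mulrN tE; lra.
Qed.

Lemma combination_le0 (R : realFieldType) (t Gb Gb' Gz E s : R) : 0 <= t <= 1 ->
  Gb' <= 0 -> Gb <= Gb' + 4 * s -> Gz <= - E -> t * E = 4 * s -> 0 <= s ->
  (1 - t) * Gb + t * Gz <= 0.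
Proof.
move=> /andP[t0 t1] Gb'0 GbGb' GzE tE s0.
have : (1 - t) * Gb <= (1 - t) * (4 * s) by rewrite ler_wpM2l ?subr_ge0 //; lra.
have : t * Gz <= t * - E by rewrite ler_wpM2l.
have : 0 <= t * s by rewrite mulr_ge0.
by rewrite mulrN tE; lra.
Qed.

Lemma min_norm_gap_arith (R : realFieldType) (t a b z c D2 : R) : 0 <= t <= 1 ->
  0 <= c <= a -> 0 <= b -> 0 <= z -> a <= (1 - t) * b + c -> z <= (1 - t) * a + c ->
  D2 <= 2 * z ^+ 2 - 2 * b ^+ 2 -> D2 <= 8 * a * c.
Proof.
move=> /andP[t0 t1] /andP[c0 ca] b0 z0 ab za Dzb.
have ta : (1 - t) * a <= a by apply: ler_piMl; lra.
have tb : (1 - t) * b <= b by apply: ler_piMl; lra.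
have z2 : z ^+ 2 <= (a + c) ^+ 2 by rewrite ler_pXn2r ?nnegrE //; lra.
have b2 : (a - c) ^+ 2 <= b ^+ 2 by rewrite ler_pXn2r ?nnegrE //; lra.
lra.
Qed.

Lemma ler_sqrt_bound (R : rcfType) (k a b c x : R) :
  0 <= k -> 0 <= a -> 0 < b -> 0 <= c -> 0 <= x ->
  x ^+ 2 <= k ^+ 2 * a * c / b -> x <= k * Num.sqrt a / Num.sqrt b * Num.sqrt c.
Proof.
move=> k0 a0 b0 c0 x0 x2; rewrite -(ler_pXn2r (n := 2)) ?nnegrE //; last first.
  by rewrite !mulr_ge0 ?invr_ge0 ?sqrtr_ge0.
by rewrite !exprMn exprVn !sqr_sqrtr ?(ltW b0) // mulrAC.
Qed.

Lemma sqrt_perturbation_bound (R : rcfType) (D delta z N s eps : R) :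
  0 < eps -> 0 < N -> 0 <= delta -> 0 <= z <= N -> 0 <= D ->
  delta * N = 240 * s / eps -> D ^+ 2 <= 8 * delta * z ^+ 2 ->
  D <= 128 * Num.sqrt N / Num.sqrt eps * Num.sqrt s.
Proof.
move=> e0 N0 delta0 /andP[z0 zN] D0 delta_N D2.
have s0 : 0 <= s.
  by have := mulr_ge0 delta0 (ltW N0); rewrite delta_N pmulr_lge0 ?invr_gt0 //; lra.
apply: ler_sqrt_bound; rewrite ?ler0n ?(ltW N0) //; apply: le_trans D2 _.
have z2 : z ^+ 2 <= N ^+ 2 by rewrite ler_pXn2r ?nnegrE ?(ltW N0).
apply: le_trans (ler_wpM2l _ z2) _; first by rewrite mulr_ge0.
have -> : 8 * delta * N ^+ 2 = 1920 * (N * s / eps).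
  have -> : 8 * delta * N ^+ 2 = 8 * N * (delta * N) by ring.
  by rewrite delta_N; field; rewrite gt_eqF.
have -> : 128 ^+ 2 * N * s / eps = 16384 * (N * s / eps) by rewrite expr2; field; rewrite gt_eqF.
by rewrite ler_wpM2r ?ler_nat // divr_ge0 ?mulr_ge0 ?(ltW N0) ?(ltW e0).
Qed.

Section Perturbation.
Variables (R : realType) (d m l : nat) (X : set 'rV[R]_d) (w : 'I_l -> 'rV[R]_d)
  (P : 'M[R]_(m, d)) (eps : R) (u v : 'rV[R]_d) (zs : 'rV[R]_m) (s delta E : R).
Hypotheses (eps01 : 0 <= eps <= 1) (w_le1 : forall i, enorm (w i) <= 1)
  (residual_shift : enorm ((u - NN X u) - (v - NN X v)) <= 3 * s)
  (zs_margin : forall i, g_lo X w P eps zs u i <= - E /\ g_hi X w P eps zs u i <= - E)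
  (E_ge0 : 0 <= E) (delta01 : 0 <= delta <= 1) (deltaE : delta * E = 4 * s).

Local Notation F := (Ftil X w P eps).
Local Notation shift b := ((1 - delta) *: b + delta *: zs).

Lemma Ftil_shift_uv b : F u b -> F v (shift b).
Proof.
move=> Fb i; have [b_lo b_hi] := Fb i; have [zs_lo zs_hi] := zs_margin i.
have [lo hi] := g_shift P (shift b) eps01 (w_le1 i) residual_shift.
rewrite [X in _ <= X + _]g_lo_combination in lo.
rewrite [X in _ <= X + _]g_hi_combination in hi.
by split; [exact: shifted_combination_le0 b_lo zs_lo deltaE lo
          | exact: shifted_combination_le0 b_hi zs_hi deltaE hi].
Qed.

Lemma Ftil_shift_vu b : F v b -> F u (shift b).
Proof.
have s_ge0 : 0 <= s by have := le_trans (enorm_ge0 _) residual_shift; lra.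
have residual_shift' : enorm ((v - NN X v) - (u - NN X u)) <= 3 * s.
  by rewrite enorm_distC.
move=> Fb i; have [b_lo b_hi] := Fb i; have [zs_lo zs_hi] := zs_margin i.
have [lo hi] := g_shift P b eps01 (w_le1 i) residual_shift'.
rewrite g_lo_combination g_hi_combination.
by split; [exact: combination_le0 b_lo lo zs_lo deltaE s_ge0
          | exact: combination_le0 b_hi hi zs_hi deltaE s_ge0].
Qed.

Lemma beta_perturbation : delta * enorm zs <= enorm (beta X w P eps u) ->
  enorm (shift (beta X w P eps u) - beta X w P eps v) ^+ 2 <= 8 * delta * enorm zs ^+ 2.
Proof.
set bu := beta X w P eps u; set bv := beta X w P eps v; set c := delta * enorm zs => cbu.
have zsF : F u zs.
  by move=> i; have [lo hi] := zs_margin i; split; [apply: le_trans lo _ | apply: le_trans hi _];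
    rewrite oppr_le0.
have [buF bu_min] := beta_argmin zsF.
have zvF := Ftil_shift_uv buF.
have [bvF bv_min] := beta_argmin zvF.
have bu_le : enorm bu <= (1 - delta) * enorm bv + c.
  exact: le_trans (bu_min _ (Ftil_shift_vu bvF)) (ler_enorm_combination _ _ delta01).
have zv_le : enorm (shift bu) <= (1 - delta) * enorm bu + c.
  exact: ler_enorm_combination.
have mid_ge : enorm bv <= enorm (2^-1 *: (shift bu + bv)).
  apply: bv_min; have -> : 2^-1 *: (shift bu + bv) = (1 - 2^-1) *: shift bu + 2^-1 *: bv.
    by rewrite scalerDr; congr (_ *: _ + _); field.
  by apply: Ftil_convex => //; rewrite invr_ge0 invf_le1 ?ler0n ?ler1n.
have c0 : 0 <= c by rewrite mulr_ge0 ?enorm_ge0 //; case/andP: delta01.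
have := min_norm_gap_arith delta01 (introT andP (conj c0 cbu)) (enorm_ge0 bv)
  (enorm_ge0 _) bu_le zv_le (min_norm_gap mid_ge).
move/le_trans; apply; rewrite (_ : 8 * delta * _ = 8 * enorm zs * c); last by rewrite /c; ring.
by rewrite ler_wpM2r // ler_wpM2l // bu_min.
Qed.
End Perturbation.

Unset Implicit Arguments.

Theorem lemma4p7 (R : realType) (d m l : nat) (X : set 'rV[R]_d) (eps : R)
    (w : 'I_l -> 'rV[R]_d) (P : 'M[R]_(m, d)) (u : 'rV[R]_d) (zs : 'rV[R]_m)
    (v : 'rV[R]_d) :
  (0 < reach X)%E ->
  (forall a b, tube X a -> tube X b -> enorm (NN X a - NN X b) <= 2 * enorm (a - b)) ->
  0 < eps < 1 ->
  (forall i, unit_secants X (w i)) ->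
  (forall s, unit_secants X s -> exists i, enorm (s - w i) < eps / 40) ->
  hull_distortion P (eps / 240) (unit_secants X) ->
  tube X u -> ~ eclosure X u ->
  enorm zs <= enorm (u - NN X u) ->
  (forall i, g_lo X w P eps zs u i <= - (eps / 60 * enorm (u - NN X u)) /\
             g_hi X w P eps zs u i <= - (eps / 60 * enorm (u - NN X u))) ->
  beta X w P eps u != 0 ->
  tube X v ->
  enorm (u - v) < Num.min 1 (eps * enorm (u - NN X u) / 480) ->
  enorm (u - v) <= eps * enorm (beta X w P eps u) / 480 ->
  let delta := 240 * enorm (u - v) / (eps * enorm (u - NN X u)) in
  let zv := (1 - delta) *: beta X w P eps u + delta *: zs in
  enorm (zv - beta X w P eps v)
    <= 128 * Num.sqrt (enorm (u - NN X u)) / Num.sqrt eps * Num.sqrt (enorm (u - v)).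
Proof.
move=> _ NN_lip /andP[e0 e1] w_sec _ _ tu _ zsN zs_margin _ tv suv s_le; cbv zeta.
set N := enorm (u - NN X u) in zsN zs_margin suv s_le *.
set s := enorm (u - v) in suv s_le *.
set bu := beta X w P eps u in s_le *.
set delta := 240 * s / (eps * N).
move: suv; rewrite lt_min => /andP[_ sN].
have s0 : 0 <= s := enorm_ge0 _.
have N0 : 0 < N by rewrite lt0r enorm_ge0 andbT; apply: contraTneq sN => ->; lra.
have eN0 : 0 < eps * N by rewrite mulr_gt0.
have delta_N : delta * N = 240 * s / eps by rewrite /delta; field; rewrite !gt_eqF.
have delta0 : 0 <= delta by rewrite /delta divr_ge0 ?(ltW eN0) //; lra.
have delta01 : 0 <= delta <= 1 by rewrite delta0 /delta ler_pdivrMr //=; lra.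
have c_le : delta * enorm zs <= enorm bu.
  apply: le_trans (ler_wpM2l delta0 zsN) _; rewrite delta_N.
  by rewrite ler_pdivrMr //; lra.
have deltaE : delta * (eps / 60 * N) = 4 * s.
  by rewrite mulrCA delta_N; field; rewrite gt_eqF.
have eps01 : 0 <= eps <= 1 by rewrite !ltW.
have E0 : 0 <= eps / 60 * N by rewrite mulr_ge0 ?divr_ge0 ?ltW.
have gap := beta_perturbation eps01 (fun i => unit_secant_enorm_le1 (w_sec i))
  (enorm_residual_shift (NN_lip u v tu tv)) zs_margin E0 delta01 deltaE c_le.
apply: (sqrt_perturbation_bound e0 N0 delta0 _ (enorm_ge0 _) delta_N gap).
by rewrite enorm_ge0 zsN.
Qed.
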